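(* Let $(e_i)$ denote the canonical basis of $\ell_1$, and for $n\in\mathbb{N}$ let $x_n=e_n-\tfrac12(e_{2n+1}+e_{2n+2})$. For each $n$, let $x^{(n)}_1,\dots,x^{(n)}_n$ be the copies of $x_1,\dots,x_n$ (which lie in $\ell_1^{2n+2}$) inside the $n$-th summand of the Banach lattice $Y=\big(\sum_{n}\ell_1^{2n+2}\big)_{\ell_1}$ (with its coordinatewise order). Then the sequence $\big(x^{(n)}_i\big)_{1\le i\le n,\,n\in\mathbb{N}}$, ordered by $n$ first and then by $i$, is neither uniformly quasi-greedy nor bibasic in $Y$.
   Context: A sequence $(x_k)$ of nonzero vectors in a Banach lattice is bibasic if there is $M\ge1$ with $\|\bigvee_{n=1}^m|\sum_{k=1}^na_kx_k|\|\le M\|\sum_{k=1}^ma_kx_k\|$ for all $m$ and scalars $a_k$. A semi-normalized basic sequence $(x_k)$ with span $E$ and biorthogonal functionals $x_k^*$ is uniformly quasi-greedy if $\sup_m\sup_{x\in E,\|x\|=1}\|\bigvee_{n=1}^m|\mathcal{G}_n(x)|\|<\infty$, where $\mathcal{G}_n(x)=\sum_{j=1}^n x^*_{\rho(j)}(x)x_{\rho(j)}$ and $\rho$ is the natural greedy ordering of $x$ (indices listed by non-increasing $|x_k^*(x)|$, ties broken by increasing index). (The sequence $(x^{(n)}_i)$ is known to be a semi-normalized quasi-greedy basic sequence in $Y$.) *)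

From Stdlib Require Import Reals Lra Lia.
From Coquelicot Require Import Coquelicot.
Open Scope R_scope.

(** * The Banach lattice Y = (sum_n l_1^{2n+2})_{l_1}
    A vector of Y is a function [f : nat -> nat -> R]; [f n j] is the
    j-th coordinate (1 <= j <= 2n+2) of the n-th summand (n >= 1). *)
Definition Yvec := nat -> nat -> R.

(** l_1-norm of the n-th block (j ranges over 0..2n+2; coordinate 0 vanishes). *)
Definition blocknorm (f : Yvec) (n : nat) : R :=
  sum_f_R0 (fun j => Rabs (f n j)) (2 * n + 2).

Definition inY (f : Yvec) : Prop :=
  (forall n j, (n = 0%nat \/ j = 0%nat \/ (2 * n + 2 < j)%nat) -> f n j = 0)
  /\ ex_series (blocknorm f).

(** The norm of Y (meaningful on elements of Y). *)
Definition normY (f : Yvec) : R := Series (blocknorm f).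

Definition subY (f g : Yvec) : Yvec := fun n j => f n j - g n j.

(** Lattice operations are coordinatewise:
    [maxupto F m] = \/_{n=1}^m |F n|  (and 0 for m = 0). *)
Fixpoint maxupto (F : nat -> Yvec) (m : nat) : Yvec :=
  match m with
  | O => fun _ _ => 0
  | S m' => fun p q => Rmax (maxupto F m' p q) (Rabs (F (S m') p q))
  end.

Fixpoint lincomb (c : nat -> R) (v : nat -> Yvec) (N : nat) : Yvec :=
  match N with
  | O => fun _ _ => 0
  | S N' => fun p q => lincomb c v N' p q + c N' * v N' p q
  end.

Definition xcopy (n i : nat) : Yvec :=
  fun m j =>
    if Nat.eqb m n then
      (if Nat.eqb j i then 1
       else if (Nat.eqb j (2 * i + 1) || Nat.eqb j (2 * i + 2))%bool then - (1/2)
       else 0)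
    else 0.

(** Enumeration of the pairs (n, i), 1 <= i <= n, n >= 1, ordered by n
    first and then by i: (1,1), (2,1), (2,2), (3,1), ... *)
Fixpoint dec (k : nat) : nat * nat :=
  match k with
  | O => (1%nat, 1%nat)
  | S k' => let '(n, i) := dec k' in
            if Nat.ltb i n then (n, S i) else (S n, 1%nat)
  end.

(** The sequence (x^{(n)}_i), indexed from 0. *)
Definition useq (k : nat) : Yvec := let '(n, i) := dec k in xcopy n i.

Definition bibasic (x : nat -> Yvec) : Prop :=
  (forall k, exists p q, x k p q <> 0) /\
  exists M : R, 1 <= M /\
    forall (m : nat) (a : nat -> R),
      normY (maxupto (fun n => lincomb a x n) m) <= M * normY (lincomb a x m).

(** [a] is the coefficient sequence (x_k^*(xv))_k of [xv] in the closed span: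
    xv = sum_k a_k x_k, the series converging in Y. *)
Definition expansion (x : nat -> Yvec) (a : nat -> R) (xv : Yvec) : Prop :=
  inY xv /\ is_lim_seq (fun N => normY (subY xv (lincomb a x N))) 0.

Definition greedy_ordering (a : nat -> R) (rho : nat -> nat) : Prop :=
  (forall i j, rho i = rho j -> i = j) /\
  (forall k, a k <> 0 -> exists j, rho j = k) /\
  (forall i j, (i < j)%nat ->
     Rabs (a (rho j)) < Rabs (a (rho i)) \/
     (Rabs (a (rho j)) = Rabs (a (rho i)) /\ (rho i < rho j)%nat)).

Definition greedy_sum (x : nat -> Yvec) (a : nat -> R) (rho : nat -> nat) (n : nat)
  : Yvec := lincomb (fun j => a (rho j)) (fun j => x (rho j)) n.

Definition uniformly_quasi_greedy (x : nat -> Yvec) : Prop :=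
  exists C : R, forall (a : nat -> R) (xv : Yvec) (rho : nat -> nat) (m : nat),
    expansion x a xv -> normY xv = 1 -> greedy_ordering a rho ->
    normY (maxupto (greedy_sum x a rho) m) <= C.

From Stdlib Require Import Reals Lra Lia.
From Coquelicot Require Import Coquelicot.
Open Scope R_scope.

(** Fix b and let z_b = sum_{i <= b} x^{(b)}_i / (i+1).  Its coefficients decrease, so
    the greedy sums of z_b / |z_b| are its partial sums, and both properties would
    bound the supremum of the partial sums of z_b by a multiple of |z_b|.  The negative
    part of x_i sits on the coordinates 2i+1 and 2i+2, which are compensated only once
    x_{2i+1} and x_{2i+2} are added: the i-th partial sum equals -1/(2(i+1)) at
    coordinate 2i+1, so the supremum of the partial sums has norm at least
    (1/2) sum_{i <= b} 1/(i+1) >= ln(b+2)/2.  In z_b itself these coordinates almost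
    cancel, and |z_b| <= 4 for every b. *)

(* [block_start b = b(b-1)/2] is the index of x^{(b)}_1 in [useq]. *)
Fixpoint block_start (n : nat) : nat :=
  match n with O => O | S n' => (block_start n' + n')%nat end.

Lemma dec_block_start n i : (i <= n)%nat -> dec (block_start (S n) + i) = (S n, S i).
Proof.
  induction n as [|n IHn] in i |- *; induction i as [|i IHi]; intros Hi.
  - reflexivity.
  - lia.
  - replace (block_start (S (S n)) + 0)%nat with (S (block_start (S n) + n)) by (simpl; lia).
    cbn [dec]. rewrite IHn by lia. now rewrite Nat.ltb_irrefl.
  - replace (block_start (S (S n)) + S i)%nat with (S (block_start (S (S n)) + i)) by lia.
    cbn [dec]. rewrite IHi by lia. now destruct (Nat.ltb_spec (S i) (S (S n))); [|lia].
Qed.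

Lemma useq_block b i : (i < b)%nat -> useq (block_start b + i) = xcopy b (S i).
Proof.
  intros Hi. destruct b as [|n]; [lia|]. unfold useq. now rewrite dec_block_start by lia.
Qed.

Lemma dec_range k : (1 <= snd (dec k) <= fst (dec k))%nat.
Proof.
  induction k as [|k IH]; cbn [dec]; [simpl; lia|].
  destruct (dec k) as [n i]; simpl in *. destruct (Nat.ltb_spec i n); simpl; lia.
Qed.

Lemma useq_supp k p q : (p = 0 \/ q = 0 \/ 2 * p + 2 < q)%nat -> useq k p q = 0.
Proof.
  unfold useq. pose proof (dec_range k) as Hk. destruct (dec k) as [n i]; simpl in Hk.
  intros Hpq. unfold xcopy.
  destruct (Nat.eqb_spec p n); [subst p | reflexivity].
  destruct (Nat.eqb_spec q i); [lia|].
  destruct (Nat.eqb_spec q (2 * i + 1)); [lia|].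
  destruct (Nat.eqb_spec q (2 * i + 2)); [lia|]. reflexivity.
Qed.

Lemma lincomb_eq0 a x N p q :
  (forall k, (k < N)%nat -> a k * x k p q = 0) -> lincomb a x N p q = 0.
Proof.
  induction N as [|N IH]; intros H; simpl; [reflexivity|].
  rewrite IH by (intros k Hk; apply H; lia). rewrite H by lia. ring.
Qed.

Lemma lincomb_stable a x N0 N p q : (forall k, (N0 <= k)%nat -> a k = 0) ->
  (N0 <= N)%nat -> lincomb a x N p q = lincomb a x N0 p q.
Proof.
  intros Ha. induction N as [|N IH]; intros HN.
  - now replace N0 with 0%nat by lia.
  - destruct (Nat.eq_dec N0 (S N)) as [<-|HN0]; [reflexivity|].
    simpl. rewrite IH, Ha by lia. ring.
Qed.

Lemma lincomb_scal k a x N p q :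
  lincomb (fun j => k * a j) x N p q = k * lincomb a x N p q.
Proof. induction N as [|N IH]; simpl; [ring|]. rewrite IH. ring. Qed.

Lemma lincomb_shift a x s N p q : lincomb a x (s + N) p q =
  lincomb a x s p q + lincomb (fun j => a (s + j)%nat) (fun j => x (s + j)%nat) N p q.
Proof.
  induction N as [|N IH]; simpl.
  - rewrite Nat.add_0_r. ring.
  - rewrite Nat.add_succ_r. simpl. rewrite IH. ring.
Qed.

Lemma lincomb_useq_supp a N p q :
  (p = 0 \/ q = 0 \/ 2 * p + 2 < q)%nat -> lincomb a useq N p q = 0.
Proof. intros Hpq. apply lincomb_eq0. intros k _. rewrite useq_supp by exact Hpq. ring. Qed.

Lemma sum_f_R0_single (u : nat -> R) b N :
  (forall p, p <> b -> u p = 0) -> (b <= N)%nat -> sum_f_R0 u N = u b.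
Proof.
  intros Hu. induction N as [|N IH]; intros HbN.
  - now replace b with 0%nat by lia.
  - simpl. destruct (Nat.eq_dec b (S N)) as [->|Hb].
    + rewrite sum_eq_R0; [ring|]. intros p Hp. apply Hu. lia.
    + rewrite IH, (Hu (S N)) by lia. ring.
Qed.

Lemma is_series_single (u : nat -> R) b :
  (forall p, p <> b -> u p = 0) -> is_series u (u b).
Proof.
  intros Hu. enough (H : is_lim_seq (sum_n u) (u b)) by exact H.
  apply (is_lim_seq_ext_loc (fun _ => u b)); [|apply is_lim_seq_const].
  exists b. intros N HN. rewrite sum_n_Reals. symmetry. now apply sum_f_R0_single.
Qed.

Lemma sum_f_R0_term_le (u : nat -> R) j N :
  (forall i, 0 <= u i) -> (j <= N)%nat -> u j <= sum_f_R0 u N.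
Proof.
  intros Hu. induction N as [|N IH]; intros HjN.
  - replace j with 0%nat by lia. simpl. lra.
  - simpl. destruct (Nat.eq_dec j (S N)) as [->|Hj].
    + pose proof (cond_pos_sum u N Hu). lra.
    + pose proof (Hu (S N)). specialize (IH ltac:(lia)). lra.
Qed.

Lemma blocknorm_eq0 f p : (forall q, f p q = 0) -> blocknorm f p = 0.
Proof. intros Hf. apply sum_eq_R0. intros j _. rewrite Hf. apply Rabs_R0. Qed.

Lemma normY_block f b : (forall p q, p <> b -> f p q = 0) -> normY f = blocknorm f b.
Proof.
  intros Hf. apply is_series_unique, is_series_single. intros p Hp.
  apply blocknorm_eq0. intros q. now apply Hf.
Qed.

Lemma normY_zero f : (forall p q, f p q = 0) -> normY f = 0.
Proof.
  intros Hf. rewrite (normY_block f 0) by auto. now apply blocknorm_eq0.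
Qed.

Lemma normY_scal k f g : (forall p q, g p q = k * f p q) -> normY g = Rabs k * normY f.
Proof.
  intros Hg. unfold normY. rewrite <- Series_scal_l. apply Series_ext. intros p.
  unfold blocknorm. rewrite scal_sum. apply sum_eq. intros j _.
  rewrite Hg, Rabs_mult. ring.
Qed.

Lemma inY_block f b :
  (forall n j, (n = 0 \/ j = 0 \/ 2 * n + 2 < j)%nat -> f n j = 0) ->
  (forall p q, p <> b -> f p q = 0) -> inY f.
Proof.
  intros Hsupp Hoff. split; [exact Hsupp|]. exists (blocknorm f b).
  apply is_series_single. intros p Hp. apply blocknorm_eq0. intros q. now apply Hoff.
Qed.

Lemma blocknorm_pairs f b : blocknorm f b =
  Rabs (f b 0%nat) + sum_f_R0 (fun i => Rabs (f b (2 * i + 1)%nat) + Rabs (f b (2 * i + 2)%nat)) b.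
Proof.
  unfold blocknorm. replace (2 * b + 2)%nat with (2 * S b)%nat by lia.
  rewrite <- sum_decomposition, decomp_sum, plus_sum by lia. simpl pred.
  rewrite Rplus_assoc, Rplus_comm with (r1 := sum_f_R0 _ b). f_equal. f_equal; apply sum_eq; intros i _;
    do 2 f_equal; lia.
Qed.

Lemma maxupto_nonneg F m p q : 0 <= maxupto F m p q.
Proof.
  induction m as [|m IH]; simpl; [lra|]. eapply Rle_trans; [exact IH | apply Rmax_l].
Qed.

Lemma maxupto_ge F m N p q : (1 <= N <= m)%nat -> Rabs (F N p q) <= maxupto F m p q.
Proof.
  induction m as [|m IH]; intros HN; [lia|]. simpl.
  destruct (Nat.eq_dec N (S m)) as [->|HNm]; [apply Rmax_r|].
  eapply Rle_trans; [apply IH; lia | apply Rmax_l].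
Qed.

Lemma maxupto_zero F m p q : (forall N, F N p q = 0) -> maxupto F m p q = 0.
Proof.
  intros HF. induction m as [|m IH]; simpl; [reflexivity|].
  rewrite IH, HF, Rabs_R0. apply Rmax_left, Rle_refl.
Qed.

Lemma normY_maxupto_ge_sum G m b (g : nat -> R) :
  (forall N p q, p <> b -> G N p q = 0) ->
  (forall i, (i <= b)%nat -> exists N, (1 <= N <= m)%nat /\ g i <= Rabs (G N b (2 * i + 1)%nat)) ->
  sum_f_R0 g b <= normY (maxupto G m).
Proof.
  intros Hoff Hpeak.
  rewrite (normY_block _ b) by (intros p q Hp; apply maxupto_zero; intros; now apply Hoff).
  rewrite blocknorm_pairs. pose proof (Rabs_pos (maxupto G m b 0%nat)).
  enough (sum_f_R0 g b <= sum_f_R0 (fun i => Rabs (maxupto G m b (2 * i + 1)%nat)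
            + Rabs (maxupto G m b (2 * i + 2)%nat)) b) by lra.
  apply sum_Rle. intros i Hi. destruct (Hpeak i Hi) as [N [HN Hg]].
  pose proof (maxupto_ge G m N b (2 * i + 1)%nat HN).
  pose proof (Rabs_pos (maxupto G m b (2 * i + 2)%nat)).
  rewrite (Rabs_pos_eq (maxupto G m b _)) by apply maxupto_nonneg. lra.
Qed.

Lemma greedy_ordering_shift a s : (forall k, (k < s)%nat -> a k = 0) ->
  (forall i j, (i <= j)%nat -> Rabs (a (s + j)%nat) <= Rabs (a (s + i)%nat)) ->
  greedy_ordering a (fun j => (s + j)%nat).
Proof.
  intros Hbefore Hmono. split; [|split].
  - intros i j. lia.
  - intros k Hk. exists (k - s)%nat.
    destruct (Nat.lt_ge_cases k s) as [Hks|Hks]; [now elim Hk; apply Hbefore | lia].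
  - intros i j Hij.
    destruct (Rle_lt_or_eq_dec _ _ (Hmono i j ltac:(lia))) as [Hlt|Heq]; [now left|].
    right. split; [exact Heq | lia].
Qed.

Lemma greedy_sum_shift x a s N p q : (forall k, (k < s)%nat -> a k = 0) ->
  greedy_sum x a (fun j => (s + j)%nat) N p q = lincomb a x (s + N) p q.
Proof.
  intros Hbefore. unfold greedy_sum.
  rewrite lincomb_shift, (lincomb_eq0 a x s) by (intros k Hk; rewrite Hbefore by exact Hk; ring).
  ring.
Qed.

Lemma expansion_finite x a N0 : (forall k, (N0 <= k)%nat -> a k = 0) ->
  inY (lincomb a x N0) -> expansion x a (lincomb a x N0).
Proof.
  intros Ha HY. split; [exact HY|].
  apply (is_lim_seq_ext_loc (fun _ => 0)); [|apply is_lim_seq_const].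
  exists N0. intros N HN. symmetry. apply normY_zero. intros p q. unfold subY.
  rewrite (lincomb_stable a x N0 N) by assumption. ring.
Qed.

(** * Harmonic weights *)

Definition weight (k : nat) : R := / INR (S k).

Lemma weight_pos k : 0 < weight k.
Proof. apply Rinv_0_lt_compat, lt_0_INR. lia. Qed.

Lemma weight_antitone i j : (i <= j)%nat -> weight j <= weight i.
Proof. intros Hij. apply Rinv_le_contravar; [apply lt_0_INR; lia | apply le_INR; lia]. Qed.

Lemma weight_double_succ i : weight (2 * i + 1) = weight i / 2.
Proof.
  unfold weight. replace (INR (S (2 * i + 1))) with (2 * INR (S i))
    by (rewrite !S_INR, plus_INR, mult_INR; simpl; ring).
  rewrite Rinv_mult. unfold Rdiv. ring.
Qed.

Lemma weight_pair_gap j : weight (S j) / 2 - weight (2 * S j + 2) <= weight j - weight (S j).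
Proof.
  unfold weight. pose proof (pos_INR j).
  replace (INR (S (2 * S j + 2))) with (2 * INR j + 5)
    by (rewrite S_INR, plus_INR, mult_INR, (S_INR j); simpl; ring).
  rewrite !S_INR.
  replace (/ (INR j + 1 + 1) / 2 - / (2 * INR j + 5))
    with (/ (2 * (INR j + 2) * (2 * INR j + 5))) by (field; lra).
  replace (/ (INR j + 1) - / (INR j + 1 + 1)) with (/ ((INR j + 1) * (INR j + 2))) by (field; lra).
  apply Rinv_le_contravar; nra.
Qed.

Lemma weight_le_double i b : (b < 2 * i + 2)%nat -> weight i <= 2 * weight b.
Proof.
  intros Hib. unfold weight. rewrite !S_INR.
  assert (Hb : INR b + 1 <= 2 * (INR i + 1)).
  { replace (2 * (INR i + 1)) with (INR (2 * i + 2)) by (rewrite plus_INR, mult_INR; simpl; ring).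
    rewrite <- S_INR. apply le_INR. lia. }
  pose proof (pos_INR b). pose proof (pos_INR i).
  replace (/ (INR i + 1)) with (2 * / (2 * (INR i + 1))) by (field; lra).
  apply Rmult_le_compat_l; [lra|]. apply Rinv_le_contravar; lra.
Qed.

Lemma weight_telescope n : sum_f_R0 (fun j => weight j - weight (S j)) n = 1 - weight (S n).
Proof.
  induction n as [|n IH]; simpl sum_f_R0; [|rewrite IH]; unfold weight; simpl; lra.
Qed.

Lemma ln_succ_sub_le x : 0 < x -> ln (x + 1) - ln x <= / x.
Proof.
  intros Hx. rewrite <- ln_div by lra.
  replace ((x + 1) / x) with (1 + / x) by (field; lra).
  rewrite <- (ln_exp (/ x)) at 2. left. apply ln_increasing.
  - pose proof (Rinv_0_lt_compat x Hx). lra.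
  - apply exp_ineq1. apply Rgt_not_eq, Rinv_0_lt_compat, Hx.
Qed.

Lemma weight_sum_ge_ln n : ln (INR n + 2) <= sum_f_R0 weight n.
Proof.
  induction n as [|n IH]; simpl sum_f_R0.
  - replace (weight 0) with (ln (exp 1)) by (rewrite ln_exp; unfold weight; simpl; lra).
    left. apply ln_increasing; [simpl; lra|].
    replace (INR 0 + 2) with (1 + 1) by (simpl; ring). apply exp_ineq1. lra.
  - pose proof (pos_INR n). pose proof (ln_succ_sub_le (INR n + 2) ltac:(lra)).
    replace (weight (S n)) with (/ (INR n + 2)) by (unfold weight; rewrite !S_INR; f_equal; ring).
    rewrite S_INR. replace (INR n + 1 + 2) with (INR n + 2 + 1) by ring. lra.
Qed.

Lemma weight_sum_unbounded X : exists b, (1 <= b)%nat /\ X < sum_f_R0 weight b.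
Proof.
  destruct (INR_unbounded (exp X)) as [n Hn]. exists (S n). split; [lia|].
  eapply Rlt_le_trans; [|apply weight_sum_ge_ln].
  rewrite <- (ln_exp X) at 1. apply ln_increasing; [apply exp_pos|].
  rewrite S_INR. lra.
Qed.

(** * The test vectors *)

Definition test_coef (b k : nat) : R :=
  if (Nat.leb (block_start b) k && Nat.ltb k (block_start b + b))%bool
  then weight (S (k - block_start b)) else 0.

Definition test_partial (b m : nat) : Yvec := lincomb (test_coef b) useq (block_start b + m).

Definition test_vec (b : nat) : Yvec := test_partial b b.

Lemma test_coef_block b i : (i < b)%nat -> test_coef b (block_start b + i) = weight (S i).
Proof.
  intros Hi. unfold test_coef.
  destruct (Nat.leb_spec (block_start b) (block_start b + i)); [|lia].
  destruct (Nat.ltb_spec (block_start b + i) (block_start b + b)); [|lia].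
  simpl. do 2 f_equal. lia.
Qed.

Lemma test_coef_out b k : (k < block_start b \/ block_start b + b <= k)%nat -> test_coef b k = 0.
Proof.
  intros Hk. unfold test_coef.
  destruct (Nat.leb_spec (block_start b) k), (Nat.ltb_spec k (block_start b + b));
    simpl; auto; lia.
Qed.

Lemma test_coef_shift_nonneg b j : 0 <= test_coef b (block_start b + j).
Proof.
  destruct (Nat.lt_ge_cases j b).
  - rewrite test_coef_block by assumption. apply Rlt_le, weight_pos.
  - rewrite test_coef_out by lia. lra.
Qed.

Lemma test_coef_shift_antitone b i j : (i <= j)%nat ->
  test_coef b (block_start b + j) <= test_coef b (block_start b + i).
Proof.
  intros Hij. destruct (Nat.lt_ge_cases j b).
  - rewrite !test_coef_block by lia. apply weight_antitone. lia.
  - rewrite (test_coef_out b (block_start b + j)) by lia. apply test_coef_shift_nonneg.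
Qed.

Lemma lincomb_test_coef_off b N p q : p <> b -> lincomb (test_coef b) useq N p q = 0.
Proof.
  intros Hp. apply lincomb_eq0. intros k _.
  destruct (Nat.lt_ge_cases k (block_start b)) as [Hk|Hk];
    [rewrite test_coef_out by lia; ring|].
  destruct (Nat.lt_ge_cases k (block_start b + b)) as [Hk'|Hk'];
    [|rewrite test_coef_out by lia; ring].
  replace k with (block_start b + (k - block_start b))%nat by lia.
  rewrite useq_block by lia. unfold xcopy. rewrite (proj2 (Nat.eqb_neq p b) Hp). ring.
Qed.

Lemma test_partial_S b m p q : (m < b)%nat ->
  test_partial b (S m) p q = test_partial b m p q + weight (S m) * xcopy b (S m) p q.
Proof.
  intros Hm. unfold test_partial. rewrite Nat.add_succ_r. simpl lincomb at 1.
  now rewrite test_coef_block, useq_block by lia.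
Qed.

Lemma xcopy_pair_coord n k i e : (1 <= k)%nat -> (e = 1 \/ e = 2)%nat ->
  xcopy n k n (2 * i + e)%nat =
  (if Nat.eqb (2 * i + e) k then 1 else 0) - (if Nat.eqb i k then / 2 else 0).
Proof.
  intros Hk He. unfold xcopy. rewrite Nat.eqb_refl.
  destruct (Nat.eqb_spec (2 * i + e) k), (Nat.eqb_spec i k); try lia; [lra | |];
  destruct (Nat.eqb_spec (2 * i + e) (2 * k + 1)), (Nat.eqb_spec (2 * i + e) (2 * k + 2));
    simpl; try lia; lra.
Qed.

Lemma test_partial_pair_coord b m i e : (m <= b)%nat -> (e = 1 \/ e = 2)%nat ->
  test_partial b m b (2 * i + e)%nat =
  (if Nat.leb (2 * i + e) m then weight (2 * i + e) else 0)
  - (if (Nat.leb 1 i && Nat.leb i m)%bool then weight i / 2 else 0).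
Proof.
  intros Hm He. induction m as [|m IH].
  - unfold test_partial. rewrite Nat.add_0_r, lincomb_eq0
      by (intros k Hk; rewrite test_coef_out by lia; ring).
    destruct (Nat.leb_spec (2 * i + e) 0), (Nat.leb_spec 1 i), (Nat.leb_spec i 0);
      simpl; try lia; ring.
  - rewrite test_partial_S, IH, xcopy_pair_coord by lia.
    destruct (Nat.eqb_spec (2 * i + e) (S m)) as [Hj|Hj], (Nat.eqb_spec i (S m)) as [Hi|Hi];
      try lia; [rewrite <- Hj | rewrite Hi |];
      repeat match goal with |- context [Nat.leb ?x ?y] => destruct (Nat.leb_spec x y) end;
      simpl; try lia; lra.
Qed.

Lemma test_partial_peak b i : (1 <= b)%nat -> (i <= b)%nat ->
  exists N, (1 <= N <= b)%nat /\ weight i / 2 <= Rabs (test_partial b N b (2 * i + 1)%nat).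
Proof.
  intros Hb Hi. pose proof (weight_pos i).
  destruct i as [|i].
  - exists 1%nat. split; [lia|].
    rewrite test_partial_pair_coord, weight_double_succ by lia. simpl.
    rewrite Rminus_0_r, Rabs_pos_eq; lra.
  - exists (S i). split; [lia|]. rewrite test_partial_pair_coord by lia.
    destruct (Nat.leb_spec (2 * S i + 1) (S i)); [lia|]. rewrite Nat.leb_refl. simpl.
    rewrite Rminus_0_l, Rabs_Ropp, Rabs_pos_eq; lra.
Qed.

Lemma test_vec_first_pair b : (1 <= b)%nat ->
  test_vec b b 1%nat = weight 0 / 2 /\ Rabs (test_vec b b 2%nat) <= weight 0 / 2.
Proof.
  intros Hb. unfold test_vec.
  pose proof (test_partial_pair_coord b b 0 1 (le_n b) (or_introl eq_refl)) as E1.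
  pose proof (test_partial_pair_coord b b 0 2 (le_n b) (or_intror eq_refl)) as E2.
  rewrite weight_double_succ in E1. cbn [Nat.mul Nat.add] in E1, E2.
  change (Nat.leb 1 0) with false in E1, E2. cbn [andb] in E1, E2.
  rewrite E1, E2. destruct (Nat.leb_spec 1 b) as [_|]; [|lia]. split; [ring|].
  pose proof (weight_antitone 1 2 ltac:(lia)) as Hw.
  replace (weight 1) with (weight 0 / 2) in Hw by (symmetry; exact (weight_double_succ 0)).
  pose proof (weight_pos 0). pose proof (weight_pos 2).
  destruct (Nat.leb 2 b); rewrite Rminus_0_r, Rabs_pos_eq; lra.
Qed.

Lemma test_vec_pair_bound b j : (j < b)%nat ->
  Rabs (test_vec b b (2 * S j + 1)%nat) + Rabs (test_vec b b (2 * S j + 2)%nat)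
  <= weight j - weight (S j) + 2 * weight b.
Proof.
  intros Hj. unfold test_vec. rewrite !test_partial_pair_coord, weight_double_succ by lia.
  destruct (Nat.leb_spec 1 (S j)); [|lia]. destruct (Nat.leb_spec (S j) b); [|lia]. cbn [andb].
  pose proof (weight_pos (S j)). pose proof (weight_pos b).
  pose proof (weight_antitone j (S j) ltac:(lia)).
  destruct (Nat.leb_spec (2 * S j + 2) b) as [Hfull|Hcut].
  - destruct (Nat.leb_spec (2 * S j + 1) b); [|lia].
    pose proof (weight_pair_gap j).
    pose proof (weight_antitone (2 * S j + 1) (2 * S j + 2) ltac:(lia)) as Hw.
    rewrite weight_double_succ in Hw.
    rewrite Rminus_diag, Rabs_R0, Rabs_left1 by lra. lra.
  - pose proof (weight_le_double (S j) b Hcut).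
    destruct (Nat.leb (2 * S j + 1) b);
      rewrite ?Rminus_diag, ?Rabs_R0, ?Rminus_0_l, ?Rabs_Ropp, Rabs_pos_eq; lra.
Qed.

Lemma test_vec_norm_pos b : (1 <= b)%nat -> 0 < normY (test_vec b).
Proof.
  intros Hb. rewrite (normY_block _ b) by (intros p q Hp; now apply lincomb_test_coef_off).
  destruct (test_vec_first_pair b Hb) as [H1 _]. pose proof (weight_pos 0).
  eapply Rlt_le_trans; [|apply (sum_f_R0_term_le (fun j => Rabs (test_vec b b j)) 1)].
  - rewrite H1, Rabs_pos_eq; lra.
  - intros j. apply Rabs_pos.
  - lia.
Qed.

Lemma test_vec_norm_le b : (1 <= b)%nat -> normY (test_vec b) <= 4.
Proof.
  intros Hb. rewrite (normY_block _ b) by (intros p q Hp; now apply lincomb_test_coef_off).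
  rewrite blocknorm_pairs, decomp_sum by lia.
  replace (test_vec b b 0%nat) with 0 by (symmetry; apply lincomb_useq_supp; lia).
  destruct (test_vec_first_pair b Hb) as [H1 H2].
  change (2 * 0 + 1)%nat with 1%nat. change (2 * 0 + 2)%nat with 2%nat. rewrite H1.
  assert (Hrest := sum_Rle _ (fun j => weight j - weight (S j) + 2 * weight b) (pred b)
    (fun j Hj => test_vec_pair_bound b j ltac:(lia))).
  rewrite (plus_sum (fun j => weight j - weight (S j))), weight_telescope, sum_cte,
    Nat.succ_pred_pos in Hrest by lia.
  assert (Hwb : weight b * INR b <= 1).
  { pose proof (weight_pos b). pose proof (pos_INR b).
    replace (weight b * INR b) with (1 - weight b) by (unfold weight; rewrite S_INR; field; lra).
    lra. }
  assert (Hw0 : weight 0 = 1) by (unfold weight; simpl; lra).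
  pose proof (weight_pos b).
  rewrite Rabs_R0, (Rabs_pos_eq (weight 0 / 2)) by lra. lra.
Qed.

Section NormalizedTestVector.

Variable b : nat.

Definition unit_test_coef (k : nat) : R := / normY (test_vec b) * test_coef b k.

Lemma unit_test_coef_before k : (k < block_start b)%nat -> unit_test_coef k = 0.
Proof. intros Hk. unfold unit_test_coef. rewrite test_coef_out by lia. ring. Qed.

Lemma lincomb_unit_test_coef N p q :
  lincomb unit_test_coef useq N p q = / normY (test_vec b) * lincomb (test_coef b) useq N p q.
Proof. apply lincomb_scal. Qed.

Lemma unit_test_expansion :
  expansion useq unit_test_coef (lincomb unit_test_coef useq (block_start b + b)).
Proof.
  apply expansion_finite.
  - intros k Hk. unfold unit_test_coef. rewrite test_coef_out by lia. ring.
  - apply (inY_block _ b).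
    + intros n j Hnj. now apply lincomb_useq_supp.
    + intros p q Hp. rewrite lincomb_unit_test_coef, lincomb_test_coef_off by exact Hp. ring.
Qed.

Lemma unit_test_greedy_sum N p q :
  greedy_sum useq unit_test_coef (fun j => (block_start b + j)%nat) N p q
  = / normY (test_vec b) * test_partial b N p q.
Proof.
  rewrite greedy_sum_shift by exact unit_test_coef_before. apply lincomb_unit_test_coef.
Qed.

Hypothesis Hb : (1 <= b)%nat.

Lemma unit_test_norm : normY (lincomb unit_test_coef useq (block_start b + b)) = 1.
Proof.
  pose proof (test_vec_norm_pos b Hb) as HL.
  rewrite (normY_scal (/ normY (test_vec b)) (test_vec b)) by (intros; apply lincomb_unit_test_coef).
  rewrite Rabs_pos_eq by (apply Rlt_le, Rinv_0_lt_compat, HL). field. lra.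
Qed.

Lemma unit_test_greedy_ordering :
  greedy_ordering unit_test_coef (fun j => (block_start b + j)%nat).
Proof.
  apply greedy_ordering_shift; [exact unit_test_coef_before|].
  intros i j Hij. unfold unit_test_coef.
  pose proof (Rinv_0_lt_compat _ (test_vec_norm_pos b Hb)).
  pose proof (test_coef_shift_nonneg b i). pose proof (test_coef_shift_nonneg b j).
  pose proof (test_coef_shift_antitone b i j Hij).
  rewrite !Rabs_mult, !Rabs_pos_eq by lra. apply Rmult_le_compat_l; lra.
Qed.

End NormalizedTestVector.

Lemma not_bibasic_useq : ~ bibasic useq.
Proof.
  intros [_ [M [HM1 HM]]].
  destruct (weight_sum_unbounded (8 * M)) as [b [Hb Hbig]].
  specialize (HM (block_start b + b)%nat (test_coef b)).
  assert (Hlow : sum_f_R0 (fun i => weight i * / 2) b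
                 <= normY (maxupto (fun n => lincomb (test_coef b) useq n) (block_start b + b))).
  { apply normY_maxupto_ge_sum.
    - intros N p q Hp. now apply lincomb_test_coef_off.
    - intros i Hi. destruct (test_partial_peak b i Hb Hi) as [N [HN Hpeak]].
      exists (block_start b + N)%nat. split; [lia | exact Hpeak]. }
  rewrite <- scal_sum in Hlow.
  pose proof (test_vec_norm_le b Hb).
  change (lincomb (test_coef b) useq (block_start b + b)) with (test_vec b) in HM.
  assert (M * normY (test_vec b) <= M * 4) by (apply Rmult_le_compat_l; lra).
  lra.
Qed.

Lemma not_uniformly_quasi_greedy_useq : ~ uniformly_quasi_greedy useq.
Proof.
  intros [C HC].
  destruct (weight_sum_unbounded (8 * C)) as [b [Hb Hbig]].
  set (L := normY (test_vec b)).
  assert (HL0 : 0 < L) by exact (test_vec_norm_pos b Hb).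
  assert (HL4 : L <= 4) by exact (test_vec_norm_le b Hb).
  specialize (HC _ _ _ b (unit_test_expansion b) (unit_test_norm b Hb)
                (unit_test_greedy_ordering b Hb)).
  assert (Hlow : sum_f_R0 (fun i => weight i * / (2 * L)) b <= C).
  { eapply Rle_trans; [|exact HC]. apply normY_maxupto_ge_sum.
    - intros N p q Hp. rewrite unit_test_greedy_sum. unfold test_partial.
      rewrite lincomb_test_coef_off by exact Hp. ring.
    - intros i Hi. destruct (test_partial_peak b i Hb Hi) as [N [HN Hpeak]].
      exists N. split; [exact HN|]. rewrite unit_test_greedy_sum, Rabs_mult.
      rewrite (Rabs_pos_eq (/ _)) by (apply Rlt_le, Rinv_0_lt_compat, HL0). fold L.
      replace (weight i * / (2 * L)) with (/ L * (weight i / 2)) by (field; lra).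
      apply Rmult_le_compat_l; [apply Rlt_le, Rinv_0_lt_compat, HL0 | exact Hpeak]. }
  rewrite <- scal_sum in Hlow.
  assert (Hsum : sum_f_R0 weight b <= 2 * L * C).
  { apply (Rmult_le_reg_r (/ (2 * L))); [apply Rinv_0_lt_compat; lra|].
    replace (2 * L * C * / (2 * L)) with C by (field; lra). lra. }
  pose proof (cond_pos_sum weight b (fun i => Rlt_le _ _ (weight_pos i))).
  nra.
Qed.

Theorem proposition4p1 : ~ uniformly_quasi_greedy useq /\ ~ bibasic useq.
Proof. split; [apply not_uniformly_quasi_greedy_useq | apply not_bibasic_useq]. Qed.
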